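(* Let $G$ be a group, $n\ge2$, $X=\{x_1,\dots,x_n\}$, fix a function $X\to G$, and let $(\mathcal X_l)_{l\ge1}$ be a non-backtracking random walk on $(G,X)$ which is irreducible as a Markov chain on $\Omega$. Then $(\mathcal X_l)$ has period $2$ if and only if there exists a subgroup $H\le G$ of index $2$ such that $x_i\notin H$ for all $i=1,\dots,n$.
   Context: Let $G$ be a group, $X=\{x_1,\dots,x_n\}$ a set with $n\ge 2$, and fix a function $X\to G$; we identify each $x_i$ with its image in $G$. Let $\Omega=G\times\{\pm1,\pm2,\dots,\pm n\}$, with elements written $(g,\epsilon i)$, $g\in G$, $\epsilon=\pm1$, $i\in\{1,\dots,n\}$. A non-backtracking random walk on $(G,X)$ is a Markov chain $(\mathcal X_l)_{l\ge1}$ on $\Omega$ with transition probabilities $\mathbb P(\mathcal X_{l+1}=(g,\epsilon i)\mid \mathcal X_l=(h,\epsilon' j))=\alpha_{\epsilon' j,\epsilon i}$ if $g=hx_i^{\epsilon}$ and $\epsilon i\neq -\epsilon' j$, and $=0$ otherwise, where the $\alpha_{\epsilon' j,\epsilon i}$ are positive constants with $\sum_{\epsilon i\neq-\epsilon' j}\alpha_{\epsilon' j,\epsilon i}=1$ for each $\epsilon' j$; and with initial distribution $\mathbb P(\mathcal X_1=(g,\epsilon i))=\beta_{\epsilon i}$ if $g=x_i^{\epsilon}$ and $0$ otherwise, for positive constants $\beta_{\epsilon i}$ summing to $1$. Irreducibility and period refer to the Markov chain on the full state space $\Omega$. *)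

From HB Require Import structures.
From mathcomp Require Import all_boot all_order all_algebra.
From Stdlib Require Import ClassicalEpsilon.
Set Implicit Arguments. Unset Strict Implicit. Unset Printing Implicit Defensive.
Import Order.TTheory GRing.Theory Num.Theory.
Local Open Scope ring_scope.

Record grp := Grp {
  gcarrier :> Type;
  gmul : gcarrier -> gcarrier -> gcarrier;
  gone : gcarrier;
  ginv : gcarrier -> gcarrier;
  gmulA : forall a b c, gmul a (gmul b c) = gmul (gmul a b) c;
  gmul1 : forall a, gmul gone a = a;
  gmulV : forall a, gmul (ginv a) a = gone
}.

(* Subgroups as predicates, and "index 2": exactly two left cosets,
   i.e. some a not in H with G = H u aH. *)
Definition subgroup (G : grp) (H : G -> Prop) : Prop :=
  H (gone G) /\ (forall a b, H a -> H b -> H (gmul a b)) /\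
  (forall a, H a -> H (ginv a)).

Definition index_two (G : grp) (H : G -> Prop) : Prop :=
  exists a : G, ~ H a /\ forall g : G, H g \/ H (gmul (ginv a) g).

(* Signed letters eps*i : (eps, i) with eps = true for +1, false for -1,
   and i : 'I_n standing for the index i+1 in {1..n}. *)
Definition letter (n : nat) : finType := (bool * 'I_n)%type.
Definition lopp n (a : letter n) : letter n := (~~ a.1, a.2).

Definition lval (G : grp) n (x : 'I_n -> G) (a : letter n) : G :=
  if a.1 then x a.2 else ginv (x a.2).

Definition state (G : grp) n := (gcarrier G * letter n)%type.

Definition pdec (P : Prop) : bool :=
  if excluded_middle_informative P then true else false.

Definition nbrw_P (R : realFieldType) (G : grp) n (x : 'I_n -> G)
  (alpha : letter n -> letter n -> R) (u v : state G n) : R :=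
  if pdec (v.1 = gmul u.1 (lval x v.2)) && (v.2 != lopp u.2)
  then alpha u.2 v.2 else 0.

(* Positivity of k-step transition probabilities P^k(u,v) > 0, expressed
   as existence of a path of length k with positive one-step probabilities. *)
Fixpoint nstep_pos (S : Type) (R : realFieldType) (P : S -> S -> R)
  (k : nat) (u v : S) : Prop :=
  match k with
  | 0 => u = v
  | k'.+1 => exists w, 0 < P u w /\ nstep_pos P k' w v
  end.

Definition irreducible (S : Type) (R : realFieldType) (P : S -> S -> R) : Prop :=
  forall u v : S, exists k, nstep_pos P k u v.

Definition is_gcd_of (A : nat -> Prop) (d : nat) : Prop :=
  (forall k, A k -> (d %| k)%N) /\
  (forall e, (forall k, A k -> (e %| k)%N) -> (e %| d)%N).

Definition state_period (S : Type) (R : realFieldType) (P : S -> S -> R)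
  (u : S) (d : nat) : Prop :=
  is_gcd_of (fun k => (0 < k)%N /\ nstep_pos P k u u) d.

Definition has_period (S : Type) (R : realFieldType) (P : S -> S -> R)
  (d : nat) : Prop := forall u : S, state_period P u d.

From HB Require Import structures.
From mathcomp Require Import all_boot all_order all_algebra.
From Stdlib Require Import ClassicalEpsilon.
Import Order.TTheory GRing.Theory Num.Theory.
Set Implicit Arguments. Unset Strict Implicit. Unset Printing Implicit Defensive.
Local Open Scope ring_scope.

(* Call a function s : G -> bool a "parity" if s (h x_b) = ~~ s h for every
   letter b = x_i^(+-1).  Along a walk of length k the parity of the group
   coordinate then changes by odd k, so a parity forces all return times to
   be even; conversely an index-two subgroup H avoiding every x_i gives the
   parity "g is not in H", and a parity s gives the index-two subgroup
   {g | s g = s 1} avoiding every x_i (irreducibility is used to see that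
   s is an affine homomorphism to Z/2).

   The other half of the argument is a "level" construction valid for any
   irreducible chain: if e divides every return time at u0, the length of a
   path from u0 to v is well defined modulo e and increases by one along
   each step.  For the walk (n >= 2) the level of (h, a) does not depend on
   the letter a, so it descends to G; evaluating it on h = x_i x_i^-1 shows
   e | 2, and for e = 2 its parity is a parity function in the sense above. *)

Section GroupFacts.
Variable G : grp.

Lemma mulgV (a : G) : gmul a (ginv a) = gone G.
Proof.
rewrite -[gmul a (ginv a)]gmul1 -{1}(gmulV (ginv a)) -gmulA.
by rewrite (gmulA (ginv a) a (ginv a)) gmulV gmul1 gmulV.
Qed.

Lemma mulg1 (a : G) : gmul a (gone G) = a.
Proof. by rewrite -(gmulV a) gmulA mulgV gmul1. Qed.

Lemma invgK (a : G) : ginv (ginv a) = a.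
Proof. by rewrite -[ginv (ginv a)]mulg1 -(gmulV a) gmulA gmulV gmul1. Qed.

Lemma invMg (a b : G) : ginv (gmul a b) = gmul (ginv b) (ginv a).
Proof.
rewrite -[RHS]mulg1 -(mulgV (gmul a b)) gmulA -(gmulA (ginv b)).
by rewrite (gmulA (ginv a)) gmulV gmul1 gmulV gmul1.
Qed.

Lemma index_two_mul_out (H : G -> Prop) (g g' : G) :
  subgroup H -> index_two H -> ~ H g -> ~ H g' -> H (gmul g g').
Proof.
move=> [_ [HM HV]] [a [_ Hcov]] Hg Hg'.
have Hag : H (gmul (ginv a) (ginv g)).
  by case: (Hcov (ginv g)) => // /HV; rewrite invgK.
have Hag' : H (gmul (ginv a) g') by case: (Hcov g').
have := HM _ _ (HV _ Hag) Hag'.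
by rewrite invMg !invgK -gmulA (gmulA a) mulgV gmul1.
Qed.

End GroupFacts.

Lemma pdecP (P : Prop) : reflect P (pdec P).
Proof. by rewrite /pdec; case: excluded_middle_informative => HP; constructor. Qed.

Section Paths.
Local Open Scope nat_scope.
Variables (S : Type) (R : realFieldType) (P : S -> S -> R).

Lemma nstep_cat k1 k2 u v w :
  nstep_pos P k1 u v -> nstep_pos P k2 v w -> nstep_pos P (k1 + k2) u w.
Proof.
elim: k1 u => [|k IH] u /=; first by move=> ->.
by move=> [w' [Hw Hk]] H2; exists w'; split => //; apply: IH Hk H2.
Qed.

Lemma nstep_snoc k u v w :
  nstep_pos P k u v -> (0 < P v w)%R -> nstep_pos P k.+1 u w.
Proof. by move=> Huv Hvw; rewrite -addn1; apply: nstep_cat Huv _; exists w. Qed.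

(* In an irreducible chain where e divides every return time at u0, the
   lengths of any two paths from u0 to v agree modulo e: both can be closed
   into a loop at u0 by one and the same path back from v. *)
Lemma path_lengths_congr (u0 : S) (e : nat) :
  irreducible P -> (forall k, 0 < k -> nstep_pos P k u0 u0 -> e %| k) ->
  forall v k1 k2, nstep_pos P k1 u0 v -> nstep_pos P k2 u0 v ->
  k1 = k2 %[mod e].
Proof.
move=> Hirr He v k1 k2 H1 H2; have [r Hback] := Hirr v u0.
have loop_dvd k : nstep_pos P k u0 v -> (k + r) %% e = 0.
  move=> Hk; case: (posnP (k + r)) => [->|Hpos]; first by rewrite mod0n.
  by apply/eqP; exact: He _ Hpos (nstep_cat Hk Hback).
by apply/eqP; rewrite -(eqn_modDr r) (loop_dvd _ H1) (loop_dvd _ H2).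
Qed.

Lemma level_exists (u0 : S) (e : nat) :
  irreducible P -> (forall k, 0 < k -> nstep_pos P k u0 u0 -> e %| k) ->
  exists lvl : S -> nat,
    forall v w, (0 < P v w)%R -> lvl w = (lvl v).+1 %[mod e].
Proof.
move=> Hirr He.
pose lvl v := proj1_sig (constructive_indefinite_description _ (Hirr u0 v)).
have lvlP v : nstep_pos P (lvl v) u0 v.
  exact: proj2_sig (constructive_indefinite_description _ (Hirr u0 v)).
exists lvl => v w Hvw.
exact: path_lengths_congr Hirr He w _ _ (lvlP w) (nstep_snoc (lvlP v) Hvw).
Qed.

End Paths.

Lemma eqn_modS (a b e : nat) : (a.+1 == b.+1 %[mod e]) = (a == b %[mod e]).
Proof. by rewrite -(addn1 a) -(addn1 b) eqn_modDr. Qed.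

Section Letters.
Variable n : nat.

Lemma letter_neq_lopp (b : letter n) : b != lopp b.
Proof. by case: b => [[] i]; rewrite /lopp xpair_eqE /= ?andbT. Qed.

(* With at least two generators, any two letters have a common admissible
   successor: keep the sign of the first, change the index of the second. *)
Lemma common_successor (hn : (2 <= n)%N) (c1 c2 : letter n) :
  exists b : letter n, b != lopp c1 /\ b != lopp c2.
Proof.
pose i0 : 'I_n := Ordinal (ltnW hn); pose i1 : 'I_n := Ordinal hn.
pose j := if c2.2 == i0 then i1 else i0.
have Hj : j != c2.2.
  rewrite /j; case: ifP => [/eqP ->|/negbT]; last by rewrite eq_sym.
  by apply/eqP => /(congr1 val).
exists (c1.1, j); rewrite /lopp !xpair_eqE /=; split.
- by case: (c1.1).
- by rewrite (negbTE Hj) andbF.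
Qed.

End Letters.

Section Walk.
Variables (R : realFieldType) (G : grp) (n : nat) (x : 'I_n -> G).
Variable alpha : letter n -> letter n -> R.
Hypothesis Halpha_pos : forall a b : letter n, b != lopp a -> 0 < alpha a b.
Hypothesis Hirr : irreducible (nbrw_P x alpha).
Hypothesis hn : (2 <= n)%N.

Local Notation P := (nbrw_P x alpha).

Lemma step_mul (u v : state G n) : 0 < P u v -> v.1 = gmul u.1 (lval x v.2).
Proof. by rewrite /nbrw_P; case: pdecP => [|_] //=; rewrite ltxx. Qed.

Lemma step_pos (u : state G n) (b : letter n) :
  b != lopp u.2 -> 0 < P u (gmul u.1 (lval x b), b).
Proof.
move=> Hb; rewrite /nbrw_P /=; case: pdecP => [_|[]] //=.
by rewrite Hb; apply: Halpha_pos.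
Qed.

Definition parity (s : G -> bool) : Prop :=
  forall h b, s (gmul h (lval x b)) = ~~ s h.

Lemma parity_path (s : G -> bool) k u v :
  parity s -> nstep_pos P k u v -> s v.1 = s u.1 (+) odd k.
Proof.
move=> Hs; elim: k u => [|k IH] u /=; first by move=> ->; rewrite addbF.
move=> [w [Hw Hk]]; rewrite (IH w Hk) (step_mul Hw) Hs.
by case: (s u.1); case: (odd k).
Qed.

Lemma parity_translate (s : G -> bool) (g : G) :
  parity s -> parity (fun h => s (gmul g h)).
Proof. by move=> Hs h b; rewrite gmulA Hs. Qed.

Section LevelFunction.
Local Open Scope nat_scope.

Lemma group_level_exists (u0 : state G n) (e : nat) :
  (forall k, 0 < k -> nstep_pos P k u0 u0 -> e %| k) ->
  exists r : G -> nat, forall h b, r (gmul h (lval x b)) = (r h).+1 %[mod e].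
Proof.
move=> He; have [lvl Hlvl] := level_exists Hirr He.
have lvl_step (h : G) (c b : letter n) : b != lopp c ->
    lvl (gmul h (lval x b), b) = (lvl (h, c)).+1 %[mod e].
  by move=> Hb; exact: Hlvl _ _ (step_pos (u := (h, c)) Hb).
have lvl_letter_indep (h : G) (c1 c2 : letter n) :
    lvl (h, c1) = lvl (h, c2) %[mod e].
  have [b [Hb1 Hb2]] := common_successor hn c1 c2.
  by apply/eqP; rewrite -eqn_modS -(lvl_step _ _ _ Hb1) -(lvl_step _ _ _ Hb2).
exists (fun h => lvl (h, u0.2)) => h b.
rewrite (lvl_letter_indep _ _ b) (lvl_step h b b (letter_neq_lopp b)).
by apply/eqP; rewrite eqn_modS; exact/eqP/lvl_letter_indep.
Qed.

(* Such a level function forces e | 2: going along x_i and back along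
   x_i^-1 returns to the same group element after two steps. *)
Lemma return_divisor_dvd2 (u0 : state G n) (e : nat) :
  (forall k, 0 < k -> nstep_pos P k u0 u0 -> e %| k) -> e %| 2.
Proof.
move=> He; have [r Hr] := group_level_exists He.
pose i0 : 'I_n := Ordinal (ltnW hn).
have there : r (x i0) = (r (gone G)).+1 %[mod e].
  by have := Hr (gone G) (true, i0); rewrite gmul1.
have back : r (gone G) = (r (x i0)).+1 %[mod e].
  by have := Hr (x i0) (false, i0); rewrite /lval /= mulgV.
have : r (gone G) + 0 = r (gone G) + 2 %[mod e].
  by rewrite addn0 addn2 back; apply/eqP; rewrite eqn_modS; exact/eqP.
by move/eqP; rewrite eqn_modDl mod0n eq_sym.
Qed.

Lemma parity_of_even_returns (u0 : state G n) :
  (forall k, 0 < k -> nstep_pos P k u0 u0 -> 2 %| k) ->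
  exists s, parity s.
Proof.
move=> He; have [r Hr] := group_level_exists He.
exists (fun h => odd (r h)) => h b.
by have := congr1 odd (Hr h b); rewrite !odd_mod //= => ->.
Qed.

End LevelFunction.

(* A parity is an affine homomorphism to Z/2: write h as the endpoint of a
   walk from 1 and follow the parities of h and of g h along it. *)
Lemma parity_affine (s : G -> bool) (g h : G) :
  parity s -> s (gmul g h) = s g (+) s h (+) s (gone G).
Proof.
move=> Hs; pose c : letter n := (true, Ordinal (ltnW hn)).
have [k Hk] := Hirr (gone G, c) (h, c).
have via_g := parity_path (parity_translate g Hs) Hk.
have via_1 := parity_path Hs Hk.
rewrite /= mulg1 in via_g; rewrite /= in via_1.
by rewrite via_g via_1; case: (s g); case: (s (gone G)); case: (odd k).
Qed.

Lemma parity_index_two (s : G -> bool) : parity s ->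
  let H := fun g => s g = s (gone G) in
  subgroup H /\ index_two H /\ forall i, ~ H (x i).
Proof.
move=> Hs H.
have s_letter b : s (lval x b) = ~~ s (gone G).
  by rewrite -{1}(gmul1 (lval x b)) Hs.
have s_gen i : s (x i) = ~~ s (gone G) by apply: (s_letter (true, i)).
have s_gen_inv i : s (ginv (x i)) = ~~ s (gone G) by apply: (s_letter (false, i)).
rewrite /H; split; [split; [|split]|split].
- by [].
- by move=> a b Ha Hb; rewrite parity_affine // Ha Hb; case: (s (gone G)).
- move=> a Ha; have := parity_affine (ginv a) a Hs; rewrite gmulV Ha.
  by case: (s (gone G)); case: (s (ginv a)).
- pose i0 : 'I_n := Ordinal (ltnW hn); exists (x i0); split.
    by rewrite s_gen; case: (s (gone G)).
  move=> g; case: (boolP (s g == s (gone G))) => [/eqP|Hg]; first by left.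
  right; rewrite parity_affine // s_gen_inv; move: Hg.
  by case: (s g); case: (s (gone G)).
- by move=> i; rewrite s_gen; case: (s (gone G)).
Qed.

Lemma index_two_parity (H : G -> Prop) :
  subgroup H -> index_two H -> (forall i, ~ H (x i)) ->
  parity (fun g => ~~ pdec (H g)).
Proof.
move=> HH H2 Hx.
have Hletter b : ~ H (lval x b).
  case: b => [[] i]; rewrite /lval /=; first exact: Hx.
  by move=> /(proj2 (proj2 HH)); rewrite invgK; apply: Hx.
move=> h b /=; rewrite negbK.
case: (pdecP (H h)) => Hh; case: pdecP => Hhb //=.
- case: (Hletter b); have := proj1 (proj2 HH) _ _ (proj2 (proj2 HH) _ Hh) Hhb.
  by rewrite gmulA gmulV gmul1.
- by case: Hhb; apply: index_two_mul_out.
Qed.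

End Walk.

Theorem mainTheorem3 (R : realFieldType) (G : grp) (n : nat) (hn : (2 <= n)%N)
  (x : 'I_n -> G) (alpha : letter n -> letter n -> R) (beta : letter n -> R)
  (Halpha_pos : forall a b : letter n, b != lopp a -> 0 < alpha a b)
  (Halpha_sum : forall a : letter n, \sum_(b : letter n | b != lopp a) alpha a b = 1)
  (Hbeta_pos : forall a : letter n, 0 < beta a)
  (Hbeta_sum : \sum_(a : letter n) beta a = 1)
  (Hirr : irreducible (nbrw_P x alpha)) :
  has_period (nbrw_P x alpha) 2 <->
  exists H : G -> Prop, subgroup H /\ index_two H /\ forall i : 'I_n, ~ H (x i).
Proof.
split.
- move=> Hper; pose u0 : state G n := (gone G, (true, Ordinal (ltnW hn))).
  have [s Hs] : exists s, parity x s.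
    apply: (parity_of_even_returns Halpha_pos Hirr hn (u0 := u0)).
    by move=> k Hk Hloop; apply: (Hper u0).1.
  by exists (fun g => s g = s (gone G)); apply: parity_index_two.
- move=> [H [HH [H2 Hx]]]; have Hs := index_two_parity HH H2 Hx.
  move=> u; split.
  + move=> k [_ Hloop]; have := parity_path Hs Hloop.
    by rewrite dvdn2; case: (~~ _); case: (odd k).
  + move=> e He; apply: (return_divisor_dvd2 Halpha_pos Hirr hn (u0 := u)).
    by move=> k Hk Hloop; apply: He.
Qed.
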